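(* Fix $\gamma\in(0,1]$, $0<\alpha<0.25$, $r\in\mathbb N$, $\epsilon>0$, and let $\xi>0$ be arbitrarily small. There exist $C>0$ and $N_0$ such that for all $N\ge N_0$ and all $s\in\mathcal S$ with $\|s-s^*\|^{2r}\le N^{-\epsilon}$, $$\Big|[J^{T}(s^* )]^{-1}(s-s^* )\cdot\big\langle s-s^*,\nabla^2 f(s^* )(s-s^* )\big\rangle\Big|\le \frac{C}{N^{\frac{3\epsilon}{2r}-2\alpha-3\xi}}.$$
   Context: Let $N\ge1$, $\lambda=1-\gamma/N^\alpha$, and $b=b(N)\ge1$ an integer with $b=O(\log N)$. $\mathcal S=\{s\in\mathbb R^b:1\ge s_1\ge\cdots\ge s_b\ge0\}$. The mean-field vector field is $f_k(s)=\lambda(s_{k-1}^2-s_k^2)-(s_k-s_{k+1})$, $k=1,\dots,b$, with $s_0=1,s_{b+1}=0$; $s^*$ is its unique equilibrium in $\mathcal S$. $J(s^* )$ is the $b\times b$ tridiagonal Jacobian of $f$ at $s^*$ with $J_{kk}=-2\lambda s^*_k-1$, $J_{k,k+1}=1$, $J_{k+1,k}=2\lambda s^*_k$. For $x\in\mathbb R^b$, $\langle x,\nabla^2f(s^* )x\rangle$ denotes the vector in $\mathbb R^b$ whose $i$-th entry is $x^T\nabla^2 f_i(s^* )x$, where $\nabla^2f_i$ is the Hessian of $f_i$ (its only nonzero entries are $(i,i)$ equal to $-2\lambda$ and $(i-1,i-1)$ equal to $2\lambda$). ''$\cdot$'' is the Euclidean inner product and $\|\cdot\|$ the Euclidean norm.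 *)

From HB Require Import structures.
From mathcomp Require Import all_boot all_order all_algebra.
From mathcomp Require Import all_classical all_reals all_analysis.
Set Implicit Arguments. Unset Strict Implicit. Unset Printing Implicit Defensive.
Import Order.TTheory GRing.Theory Num.Theory.
Local Open Scope ring_scope.

(* Vectors s in R^b are column vectors 'cV[R]_b; paper index k (1..b)
   corresponds to the ordinal k-1. *)

Section Defs.
Variable R : realType.

(* s_k for k : nat with the boundary conventions s_0 = 1, s_{b+1} = 0
   (and 0 beyond). *)
Definition sk (b : nat) (s : 'cV[R]_b) (k : nat) : R :=
  match k with
  | 0%N => 1
  | k'.+1 => match (insub k' : option 'I_b) with Some i => s i 0 | None => 0 end
  end.

Definition inS (b : nat) (s : 'cV[R]_b) : Prop :=
  (forall i : 'I_b, 0 <= s i 0 /\ s i 0 <= 1) /\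
  (forall i j : 'I_b, (i <= j)%N -> s j 0 <= s i 0).

Definition fvec (lam : R) (b : nat) (s : 'cV[R]_b) : 'cV[R]_b :=
  \col_(i < b) (lam * (sk s i ^+ 2 - sk s i.+1 ^+ 2) - (sk s i.+1 - sk s i.+2)).

Definition Jac (lam : R) (b : nat) (s : 'cV[R]_b) : 'M[R]_b :=
  \matrix_(i < b, j < b)
    if i == j then - 2 * lam * s i 0 - 1
    else if j == i.+1 :> nat then 1
    else if i == j.+1 :> nat then 2 * lam * s j 0
    else 0.

(* Hessian of f_i (paper index i+1): entries (i,i) = -2 lam,
   (i-1,i-1) = 2 lam (when i-1 is an index), others 0. *)
Definition hessf (lam : R) (b : nat) (i : 'I_b) : 'M[R]_b :=
  \matrix_(j < b, k < b)
    if j == k then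
      (if j == i then - 2 * lam else if j.+1 == i :> nat then 2 * lam else 0)
    else 0.

Definition hessq (lam : R) (b : nat) (x : 'cV[R]_b) : 'cV[R]_b :=
  \col_(i < b) ((x^T *m hessf lam i *m x) 0 0).

Definition dotv (b : nat) (u v : 'cV[R]_b) : R := \sum_(i < b) u i 0 * v i 0.

Definition enorm (b : nat) (u : 'cV[R]_b) : R := Num.sqrt (dotv u u).

End Defs.

(* The mean-field vector field f(s), the product J(s) z and the quadratic
   form <x, nabla^2 f x> are all telescoping columns (G_k - G_(k+1))_k.  Hence
   J(s) z = <x, nabla^2 f x> amounts to the first-order recurrence
   W_(k+1) = 2 lam s_k W_k - q_k + c with q_k = 2 lam x_k^2, W_0 = W_(b+1) = 0,
   whose constant c is fixed by the boundary condition.  It is solvable for every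
   right-hand side, so J is invertible and
   [J^T]^-1 x . <x, nabla^2 f x> = x . W.  The solution is bounded by
   (b+2) prod_k max(1, 2 lam s_k) sum_k q_k, and at the equilibrium
   s_(k+1) <= lam s_k^2, so 2 lam s_k <= 2 lam^(2^k) and the product is at most
   2 / (1 - lam) = 2 N^alpha / gamma.  With b = O(log N) = O(N^xi) and
   ||x||^3 <= N^(-3 eps / 2r) this gives the bound, even with the smaller
   exponent alpha + 2 xi in place of 2 alpha + 3 xi. *)

From HB Require Import structures.
From mathcomp Require Import all_boot all_order all_algebra.
From mathcomp Require Import all_classical all_reals all_analysis.
From mathcomp Require Import zify ring lra.
Import Order.TTheory GRing.Theory Num.Theory.
Set Implicit Arguments. Unset Strict Implicit. Unset Printing Implicit Defensive.
Local Open Scope ring_scope.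

Arguments sk : simpl never.

Section LinearRecurrence.
Variables (R : realFieldType) (a : nat -> R).

Fixpoint linrec (f : nat -> R) (k : nat) : R :=
  if k is k'.+1 then a k' * linrec f k' + f k' else 0.

Lemma prod_max1_prefix_mono k m : (k <= m)%N ->
  \prod_(j < k) Num.max 1 (a j) <= \prod_(j < m) Num.max 1 (a j).
Proof.
move=> km; rewrite (big_ord_widen _ (fun j => Num.max 1 (a j)) km) big_mkcond /=.
have m1 j : 1 <= Num.max 1 (a j) by rewrite le_max lexx.
by apply: ler_prod => j _; case: ifP => _; rewrite ?lexx ?ler01 ?(le_trans ler01 (m1 j)) ?m1.
Qed.

Lemma sum_prefix_mono (f : nat -> R) k m : (forall j, 0 <= f j) -> (k <= m)%N ->
  \sum_(j < k) f j <= \sum_(j < m) f j.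
Proof.
move=> f0 km; rewrite (big_ord_widen _ f km) big_mkcond /=.
by apply: ler_sum => j _; case: ifP.
Qed.

Hypothesis a_ge0 : forall k, 0 <= a k.

Lemma linrec_ge0 f k : (forall j, 0 <= f j) -> 0 <= linrec f k.
Proof. by move=> f0; elim: k => [|k IH] //=; rewrite addr_ge0 ?mulr_ge0. Qed.

Lemma linrec1_ge1 k : 1 <= linrec (fun=> 1) k.+1.
Proof. by rewrite /= lerDr mulr_ge0 ?linrec_ge0. Qed.

Lemma linrec_le_prod_sum f k m : (forall j, 0 <= f j) -> (k <= m)%N ->
  linrec f k <= (\prod_(j < m) Num.max 1 (a j)) * \sum_(j < m) f j.
Proof.
move=> f0 km.
apply: (le_trans (y := (\prod_(j < k) Num.max 1 (a j)) * \sum_(j < k) f j)).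
  elim: k {km} => [|k IH] /=; first by rewrite !big_ord0 mulr0.
  rewrite !big_ord_recr /=.
  have P1 : 1 <= \prod_(j < k) Num.max 1 (a j).
    by move: (prod_max1_prefix_mono (leq0n k)); rewrite big_ord0.
  have m1 : 1 <= Num.max 1 (a k) by rewrite le_max lexx.
  have ma : a k <= Num.max 1 (a k) by rewrite le_max lexx orbT.
  have h1 : a k * linrec f k <=
      Num.max 1 (a k) * ((\prod_(j < k) Num.max 1 (a j)) * \sum_(j < k) f j).
    by rewrite ler_pM ?a_ge0 ?linrec_ge0.
  have h2 : f k <= (\prod_(j < k) Num.max 1 (a j)) * Num.max 1 (a k) * f k.
    by rewrite ler_peMl ?mulr_ege1.
  lra.
apply: ler_pM; rewrite ?sumr_ge0 ?prod_max1_prefix_mono ?sum_prefix_mono //.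
by rewrite prodr_ge0 // => j _; rewrite le_max ler01.
Qed.

Lemma linrec_le_linrec1 f k : (forall j, 0 <= f j) ->
  linrec f k <= linrec (fun=> 1) k * \sum_(j < k) f j.
Proof.
move=> f0; elim: k => [|k IH] /=; first by rewrite mul0r.
rewrite big_ord_recr /=.
have h1 : a k * linrec f k <= a k * (linrec (fun=> 1) k * \sum_(j < k) f j).
  by rewrite ler_wpM2l.
have h2 : 0 <= a k * linrec (fun=> 1) k * f k by rewrite !mulr_ge0 ?linrec_ge0.
have : 0 <= \sum_(j < k) f j by rewrite sumr_ge0.
lra.
Qed.

End LinearRecurrence.

Lemma bernoulli_ineq (R : realFieldType) (d : R) m : 0 <= d <= 1 ->
  (1 - d) ^+ m * (1 + m%:R * d) <= 1.
Proof.
case/andP=> d0 d1; elim: m => [|m IH]; first by rewrite expr0 mul0r addr0 mulr1.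
have e0 : 0 <= (1 - d) ^+ m by rewrite exprn_ge0 // subr_ge0.
have step : (1 - d) * (1 + m.+1%:R * d) <= 1 + m%:R * d.
  by rewrite -natr1; have : 0 <= m%:R :> R by []; nra.
by rewrite exprSr -mulrA; apply: le_trans IH; rewrite ler_wpM2l.
Qed.

(* Once [2 ^ k * d >= 1], Bernoulli gives [(1 - d) ^+ (2 ^ k) <= 1 / 2]: only the
   indices with [2 ^ k * d < 1] contribute, each with a factor at most [2]. *)
Lemma prod_max1_le_doubling (R : realFieldType) (d : R) (c : nat -> R) :
  0 < d <= 1 -> (forall k, c k <= 2 * (1 - d) ^+ (2 ^ k)) ->
  forall m, \prod_(j < m) Num.max 1 (c j) <= 2 / d.
Proof.
case/andP=> d0 d1 hc.
suff P m : \prod_(j < m) Num.max 1 (c j) <= 2 ^+ m /\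
           \prod_(j < m) Num.max 1 (c j) <= 2 / d.
  by move=> m; case: (P m).
have two_d : 2 <= 2 / d by rewrite ler_pdivlMr // ler_piMr.
elim: m => [|m [IH1 IH2]]; first by rewrite big_ord0 expr0; split; lra.
have e1 : 1 - d <= 1 by lra.
have e0 : 0 <= (1 - d) ^+ (2 ^ m) by rewrite exprn_ge0 // subr_ge0.
have P1 : 1 <= \prod_(j < m) Num.max 1 (c j).
  by move: (prod_max1_prefix_mono c (leq0n m)); rewrite big_ord0.
rewrite big_ord_recr /=.
have [big_m|small_m] := lerP 1 (2 ^+ m * d).
  have cm1 : c m <= 1.
    have B : (1 - d) ^+ (2 ^ m) * (1 + 2 ^+ m * d) <= 1.
      by rewrite -natrX bernoulli_ineq // (ltW d0) d1.
    have := hc m; nra.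
  have -> : Num.max 1 (c m) = 1 by apply/max_idPl.
  rewrite mulr1 exprS; split => //; apply: (le_trans IH1).
  by rewrite ler_peMl ?exprn_ge0 //; lra.
have cm2 : Num.max 1 (c m) <= 2.
  rewrite ge_max ler1n /=; apply: (le_trans (hc m)).
  by rewrite ler_piMr ?exprn_ile1 ?subr_ge0.
have F2 : \prod_(j < m) Num.max 1 (c j) * Num.max 1 (c m) <= 2 ^+ m * 2.
  by apply: ler_pM => //; [exact: (le_trans ler01 P1) | rewrite le_max ler01].
split; first by rewrite exprSr.
apply: (le_trans F2); rewrite ler_pdivlMr // -mulrA mulrC -mulrA ler_piMr ?ltW //.
by rewrite mulrC.
Qed.

(* The solution of [a k * W k - W k.+1 = Q k - bvp_const] with [W 0 = 0] is
   [bvp_const * linrec a 1 - linrec a Q]; the constant is chosen so that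
   [W n.+1 = 0] as well. *)
Section BoundaryValueRecurrence.
Variables (R : realFieldType) (a : nat -> R) (n : nat) (Q : nat -> R).

Definition bvp_const : R := linrec a Q n.+1 / linrec a (fun=> 1) n.+1.

Definition bvp_sol (k : nat) : R :=
  bvp_const * linrec a (fun=> 1) k - linrec a Q k.

Lemma bvp_sol0 : bvp_sol 0 = 0.
Proof. by rewrite /bvp_sol /= mulr0 subr0. Qed.

Lemma bvp_solS k : a k * bvp_sol k - bvp_sol k.+1 = Q k - bvp_const.
Proof. by rewrite /bvp_sol /=; ring. Qed.

Hypothesis a_ge0 : forall k, 0 <= a k.

Lemma bvp_sol_last : bvp_sol n.+1 = 0.
Proof.
have L1 : linrec a (fun=> 1) n.+1 != 0.
  by rewrite gt_eqF // (lt_le_trans ltr01) ?linrec1_ge1.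
by rewrite /bvp_sol /bvp_const mulfVK // subrr.
Qed.

Hypothesis Q_ge0 : forall k, 0 <= Q k.

Lemma bvp_sol_bound k : (k <= n.+1)%N ->
  `|bvp_sol k| <= n.+2%:R * (\prod_(j < n.+1) Num.max 1 (a j)) * \sum_(j < n.+1) Q j.
Proof.
move=> kn; set P := \prod_(j < n.+1) _; set S := \sum_(j < n.+1) _.
have L1_gt0 : 0 < linrec a (fun=> 1) n.+1 by rewrite (lt_le_trans ltr01) ?linrec1_ge1.
have c0 : 0 <= bvp_const by apply: divr_ge0; [exact: linrec_ge0 | exact: ltW].
have cS : bvp_const <= S by rewrite ler_pdivrMr // mulrC linrec_le_linrec1.
have L1k : linrec a (fun=> 1) k <= P * n.+1%:R.
  by have := linrec_le_prod_sum a_ge0 (fun=> ler01) kn; rewrite sumr_const card_ord.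
have LQk : linrec a Q k <= P * S by exact: linrec_le_prod_sum.
have := linrec_ge0 a_ge0 k (fun=> ler01); have := linrec_ge0 a_ge0 k Q_ge0.
have : 0 <= P by rewrite prodr_ge0 // => j _; rewrite le_max ler01.
rewrite /bvp_sol -natr1 => P0 LQ0 L10.
apply: (le_trans (ler_normB _ _)).
rewrite (ger0_norm LQ0) ger0_norm; last exact: mulr_ge0.
have : bvp_const * linrec a (fun=> 1) k <= S * (P * n.+1%:R) by rewrite ler_pM.
lra.
Qed.

End BoundaryValueRecurrence.

Section TelescopingColumns.
Variable R : realType.

Lemma sk_ord n (v : 'cV[R]_n) (i : 'I_n) : sk v i.+1 = v i 0.
Proof.
rewrite /sk; case: insubP => [j _ ji|]; last by rewrite /= ltn_ord.
by congr (v _ 0); apply/val_inj.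
Qed.

Lemma sk_out n (v : 'cV[R]_n) k : (n <= k)%N -> sk v k.+1 = 0.
Proof. by move=> nk; rewrite /sk insubN // -leqNgt. Qed.

Lemma sk_ge0 n (s : 'cV[R]_n) k : inS s -> 0 <= sk s k.
Proof.
case: k => [|k] [s01 _]; first exact: ler01.
have [kn|nk] := ltnP k n; last by rewrite sk_out.
by rewrite (sk_ord s (Ordinal kn)); case: (s01 (Ordinal kn)).
Qed.

Definition ext0 n (z : 'cV[R]_n) (k : nat) : R := if k is 0 then 0 else sk z k.

Lemma sum_delta_ext0 n (z : 'cV[R]_n) (F : R -> R) k : F 0 = 0 ->
  \sum_(j < n) (j.+1 == k)%:R * F (z j 0) = F (ext0 z k).
Proof.
move=> F0; case: k => [|k]; first by rewrite big1 // => j _; rewrite mul0r.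
have [kn|nk] := ltnP k n.
  rewrite [ext0 _ _](sk_ord z (Ordinal kn)) (bigD1 (Ordinal kn)) //= eqxx mul1r.
  rewrite big1 ?addr0 // => j jk.
  by move: jk; rewrite -val_eqE eqSS /= => /negbTE ->; rewrite mul0r.
rewrite [ext0 _ _]sk_out // F0 big1 // => j _.
by rewrite eqSS ltn_eqF ?mul0r // (leq_trans (ltn_ord j) nk).
Qed.

Definition diffcol n (G : nat -> R) : 'cV[R]_n := \col_(i < n) (G i - G i.+1).

Lemma diffcol_eq0 n (G : nat -> R) :
  diffcol n G = 0 -> forall k, (k <= n)%N -> G k = G n.
Proof.
move=> G0 k kn.
have step i : (i < n)%N -> G i = G i.+1.
  move=> lt_in; apply/eqP; rewrite -subr_eq0.
  by have := congr1 (fun v : 'cV[R]_n => v (Ordinal lt_in) 0) G0; rewrite !mxE => ->.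
have far d : (k + d <= n)%N -> G k = G (k + d)%N.
  elim: d => [|d IH] kd; first by rewrite addn0.
  by rewrite addnS -step ?IH //; lia.
by rewrite -(subnKC kn) -far ?subnKC.
Qed.

End TelescopingColumns.

Section MeanFieldTelescoping.
Variables (R : realType) (lam : R) (n : nat).
Implicit Types s x z : 'cV[R]_n.

Lemma fvec_diffcol s :
  fvec lam s = diffcol n (fun k => lam * sk s k ^+ 2 - sk s k.+1).
Proof. by apply/matrixP => i j; rewrite !mxE; ring. Qed.

Lemma Jac_mul_diffcol s z :
  Jac lam s *m z = diffcol n (fun k => 2 * lam * sk s k * ext0 z k - ext0 z k.+1).
Proof.
apply/matrixP => i j0; rewrite ord1 !mxE.
have entry (j : 'I_n) : Jac lam s i j * z j 0 =
    (j.+1 == i.+1)%:R * ((- 2 * lam * sk s i.+1 - 1) * z j 0)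
  + (j.+1 == i.+2)%:R * z j 0 + (j.+1 == i)%:R * (2 * lam * sk s i * z j 0).
  rewrite mxE -val_eqE /= !eqSS (eq_sym (val i)) (eq_sym (val i) (val j).+1).
  case: eqP => [/val_inj ->|_]; first by rewrite sk_ord ltn_eqF // gtn_eqF //=; ring.
  case: (val j =P (val i).+1) => [->|_]; first by rewrite gtn_eqF /=; [ring | lia].
  case: ((val j).+1 =P val i) => [<-|_] /=; last ring.
  by rewrite sk_ord; ring.
rewrite (eq_bigr _ (fun j _ => entry j)) !big_split /=.
rewrite (sum_delta_ext0 (F := fun y => (- 2 * lam * sk s i.+1 - 1) * y) z) ?mulr0 //.
rewrite (sum_delta_ext0 (F := id) z) //.
rewrite (sum_delta_ext0 (F := fun y => 2 * lam * sk s i * y) z) ?mulr0 //.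
by rewrite /=; ring.
Qed.

Lemma hessq_diffcol x : hessq lam x = diffcol n (fun k => 2 * lam * ext0 x k ^+ 2).
Proof.
apply/matrixP => i j0; rewrite ord1 !mxE.
have entry (j : 'I_n) : (x^T *m hessf lam i) 0 j * x j 0 =
    (j.+1 == i.+1)%:R * (- 2 * lam * x j 0 ^+ 2) + (j.+1 == i)%:R * (2 * lam * x j 0 ^+ 2).
  rewrite mxE (bigD1 j) //= big1 => [|k kj]; last by rewrite !mxE (negbTE kj) mulr0.
  rewrite !mxE eqxx -val_eqE /= !eqSS.
  case: eqP => [/val_inj ->|_]; first by rewrite gtn_eqF //=; ring.
  by case: eqP => _ /=; ring.
rewrite (eq_bigr _ (fun j _ => entry j)) big_split /=.
rewrite (sum_delta_ext0 (F := fun y => - 2 * lam * y ^+ 2) x) ?expr0n ?mulr0 //.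
rewrite (sum_delta_ext0 (F := fun y => 2 * lam * y ^+ 2) x) ?expr0n ?mulr0 //.
by rewrite /=; ring.
Qed.

End MeanFieldTelescoping.

Section Equilibrium.
Variables (R : realType) (lam : R) (n : nat) (s : 'cV[R]_n).
Hypotheses (lam_ge0 : 0 <= lam) (s_eq : fvec lam s = 0).

Lemma equilibrium_sk_succ k : sk s k.+1 <= lam * sk s k ^+ 2.
Proof.
rewrite -subr_ge0; have [kn|] := leqP k n.
  rewrite (diffcol_eq0 (etrans (esym (fvec_diffcol lam s)) s_eq) kn).
  by rewrite sk_out // subr0 mulr_ge0 ?sqr_ge0.
by case: k => // k nk; rewrite !sk_out ?(ltnW nk) // expr0n mulr0 subrr.
Qed.

Lemma equilibrium_decay : inS s -> forall k, lam * sk s k <= lam ^+ (2 ^ k).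
Proof.
move=> s_in; elim=> [|k IH]; first by rewrite [sk s 0]/sk mulr1.
rewrite expnSr exprM; apply: (le_trans (ler_wpM2l lam_ge0 (equilibrium_sk_succ k))).
by rewrite mulrA -expr2 -exprMn ler_pXn2r ?nnegrE ?mulr_ge0 ?sk_ge0 ?exprn_ge0.
Qed.

End Equilibrium.

Section JacobianPreimage.
Variables (R : realType) (lam : R) (n : nat) (s : 'cV[R]_n).
Hypotheses (lam_ge0 : 0 <= lam) (s_in : inS s).

Let coef k := 2 * lam * sk s k.

Let coef_ge0 k : 0 <= coef k.
Proof. by rewrite !mulr_ge0 ?sk_ge0. Qed.

Definition Jac_preimage (Q : nat -> R) : 'cV[R]_n :=
  \col_(i < n) bvp_sol coef n Q i.+1.

Lemma ext0_Jac_preimage Q k : (k <= n.+1)%N ->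
  ext0 (Jac_preimage Q) k = bvp_sol coef n Q k.
Proof.
case: k => [|k] kn; first by rewrite bvp_sol0.
have [lt_kn|] := ltnP k n; first by rewrite [ext0 _ _](sk_ord _ (Ordinal lt_kn)) mxE.
rewrite leq_eqVlt ltnNge -ltnS kn orbF => /eqP <-.
by rewrite [ext0 _ _]sk_out ?bvp_sol_last.
Qed.

Lemma Jac_preimageP Q : Jac lam s *m Jac_preimage Q = diffcol n Q.
Proof.
rewrite Jac_mul_diffcol; apply/matrixP => i j; rewrite !mxE.
have ext0E k : (k <= i.+2)%N -> ext0 (Jac_preimage Q) k = bvp_sol coef n Q k.
  by move=> ki; apply: ext0_Jac_preimage; have := ltn_ord i; lia.
rewrite !ext0E ?(leqW (leqnSn i)) //.
by have := bvp_solS coef n Q i; have := bvp_solS coef n Q i.+1; rewrite /coef /=; lra.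
Qed.

(* The [j]-th unit column is the difference column of the step [k <= j]. *)
Lemma Jac_unitmx : Jac lam s \in unitmx.
Proof.
pose B : 'M[R]_n := \matrix_(i, j) Jac_preimage (fun k => (k <= j)%:R) i 0.
suff /mulmx1_unit [] : Jac lam s *m B = 1%:M by [].
apply/matrixP => i j.
have := congr1 (fun v : 'cV[R]_n => v i 0) (Jac_preimageP (fun k => (k <= j)%:R)).
rewrite !mxE /= => E.
have -> : ((i == j)%:R : R) = (i <= j)%:R - (i.+1 <= j)%:R.
  by rewrite -val_eqE; case: ltngtP => _; rewrite ?subrr ?subr0.
by rewrite -E; apply: eq_bigr => k _; rewrite !mxE.
Qed.

End JacobianPreimage.

Section DotProduct.
Variables (R : realType) (n : nat).
Implicit Types x z : 'cV[R]_n.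

Lemma dotvE x z : dotv x z = (x^T *m z) 0 0.
Proof. by rewrite mxE; apply: eq_bigr => i _; rewrite mxE. Qed.

Lemma dotv_invmx_tr (J : 'M[R]_n) x z : J \in unitmx ->
  dotv (invmx J^T *m x) (J *m z) = dotv x z.
Proof.
move=> J_unit; rewrite !dotvE trmx_mul trmx_inv trmxK -!mulmxA.
by rewrite (mulmxA (invmx J)) mulVmx // mul1mx.
Qed.

Lemma enorm_ge0 x : 0 <= enorm x.
Proof. exact: sqrtr_ge0. Qed.

Lemma dotv_ge0 x : 0 <= dotv x x.
Proof. by rewrite sumr_ge0 // => i _; rewrite -expr2 sqr_ge0. Qed.

Lemma enorm_sqr x : enorm x ^+ 2 = dotv x x.
Proof. by rewrite sqr_sqrtr ?dotv_ge0. Qed.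

Lemma normr_coord_le x i : `|x i 0| <= enorm x.
Proof.
rewrite -sqrtr_sqr ler_sqrt ?dotv_ge0 // /dotv (bigD1 i) //= -expr2 lerDl.
by rewrite sumr_ge0 // => j _; rewrite -expr2 sqr_ge0.
Qed.

Lemma normr_dotv_le x z M : (forall i, `|z i 0| <= M) ->
  `|dotv x z| <= n%:R * enorm x * M.
Proof.
move=> zM; apply: (le_trans (ler_norm_sum _ _ _)).
apply: (le_trans (y := \sum_(i < n) enorm x * M)).
  by apply: ler_sum => i _; rewrite normrM ler_pM ?normr_coord_le.
by rewrite sumr_const card_ord -mulrA mulr_natl.
Qed.

End DotProduct.

Lemma hessian_form_bound (R : realType) (lam d : R) n (s x : 'cV[R]_n) :
  0 < d <= 1 -> lam = 1 - d -> inS s -> fvec lam s = 0 ->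
  `|dotv (invmx (Jac lam s)^T *m x) (hessq lam x)|
    <= 4 * n%:R * n.+2%:R / d * enorm x ^+ 3.
Proof.
move=> /andP[d0 d1] lamE s_in s_eq.
have lam0 : 0 <= lam by lra.
pose q k := 2 * lam * ext0 x k ^+ 2.
have q0 k : 0 <= q k by apply: mulr_ge0; [exact: mulr_ge0 | exact: sqr_ge0].
rewrite hessq_diffcol -(Jac_preimageP lam0 s_in q) dotv_invmx_tr ?Jac_unitmx //.
have sum_q : \sum_(j < n.+1) q j = 2 * lam * enorm x ^+ 2.
  rewrite big_ord_recl /q /= expr0n mulr0 add0r enorm_sqr /dotv mulr_sumr.
  by apply: eq_bigr => i _; rewrite /bump /= add1n sk_ord expr2.
have prod_le : \prod_(j < n.+1) Num.max 1 (2 * lam * sk s j) <= 2 / d.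
  apply: (prod_max1_le_doubling (c := fun j => 2 * lam * sk s j)) => [|k].
    by rewrite d0 d1.
  by rewrite -mulrA ler_wpM2l // -lamE equilibrium_decay.
have z_le i : `|Jac_preimage lam s q i 0| <= n.+2%:R * (2 / d) * (2 * enorm x ^+ 2).
  have coef0 k : 0 <= 2 * lam * sk s k by rewrite !mulr_ge0 ?sk_ge0.
  rewrite mxE; apply: (le_trans (bvp_sol_bound coef0 q0 (leqW (ltn_ord i)))).
  have P0 : 0 <= \prod_(j < n.+1) Num.max 1 (2 * lam * sk s j).
    by rewrite prodr_ge0 // => j _; rewrite le_max ler01.
  have x0 : 0 <= enorm x ^+ 2 by rewrite sqr_ge0.
  have S_le : 2 * lam * enorm x ^+ 2 <= 2 * enorm x ^+ 2.
    by rewrite -mulrA ler_wpM2l // ler_piMl //; lra.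
  rewrite sum_q -mulrA -(mulrA n.+2%:R); apply: ler_wpM2l => //.
  by apply: ler_pM => //; apply: mulr_ge0 => //; apply: mulr_ge0.
suff -> : 4 * n%:R * n.+2%:R / d * enorm x ^+ 3 =
  n%:R * enorm x * (n.+2%:R * (2 / d) * (2 * enorm x ^+ 2)) by exact: normr_dotv_le.
by ring.
Qed.

Lemma mulr_ln_le_powR (R : realType) (K x e : R) : 1 <= x -> 0 < e ->
  K * ln x <= `|K| / e * x `^ e.
Proof.
move=> x1 e0; have xe0 : 0 < x `^ e by rewrite powR_gt0 // (lt_le_trans ltr01).
apply: (le_trans (ler_wpM2r (ln_ge0 x1) (ler_norm K))).
rewrite -mulrA ler_wpM2l // mulrC ler_pdivlMr // mulrC -ln_powR.
by have := @le_ln1Dx _ (x `^ e - 1); rewrite [1 + _]addrC subrK; lra.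
Qed.

Lemma expr_le_powR (R : realType) (t y e : R) (m p : nat) :
  0 < y -> 0 <= t -> (0 < m)%N -> t ^+ m <= y `^ e ->
  t ^+ p <= y `^ (e * p%:R / m%:R).
Proof.
move=> y0 t0 m0 tm; set u := y `^ (e / m%:R).
have um : u ^+ m = y `^ e.
  by rewrite -powR_mulrn ?powR_ge0 // -powRrM mulfVK // pnatr_eq0 -lt0n.
have tu : t <= u by rewrite -(ler_pXn2r m0) ?nnegrE ?powR_ge0 // um.
by rewrite mulrAC powRrM powR_mulrn ?powR_ge0 // lerXn2r ?nnegrE ?powR_ge0.
Qed.

Lemma hessian_form_powR_bound (R : realType) (gamma alpha xi E L Nr lam : R) n
    (s x : 'cV[R]_n) :
  0 < gamma <= 1 -> 0 <= alpha -> 1 <= Nr -> lam = 1 - gamma / Nr `^ alpha ->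
  (0 < n)%N -> n%:R <= L * Nr `^ xi -> enorm x ^+ 3 <= Nr `^ (- E) ->
  inS s -> fvec lam s = 0 ->
  `|dotv (invmx (Jac lam s)^T *m x) (hessq lam x)|
    <= 12 * L ^+ 2 / gamma * Nr `^ (alpha + 2 * xi - E).
Proof.
move=> /andP[g0 g1] a0 Nr_ge1 lamE n_gt0 n_le x3 s_in s_eq.
have Nr0 : 0 < Nr by lra.
have Na_ge1 : 1 <= Nr `^ alpha by rewrite -(powRr0 Nr) ler_powR.
have hd : 0 < gamma / Nr `^ alpha <= 1 by rewrite divr_gt0 ?ler_pdivrMr ?mul1r //=; lra.
apply: (le_trans (hessian_form_bound x hd lamE s_in s_eq)).
have nn : n%:R * n.+2%:R <= 3 * (L * Nr `^ xi) ^+ 2.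
  have n1 : 1 <= n%:R :> R by rewrite ler1n.
  by rewrite -addn2 natrD; nra.
have powRD' u v : Nr `^ (u + v) = Nr `^ u * Nr `^ v.
  by apply: powRD; apply/implyP => _; rewrite gt_eqF.
have -> : Nr `^ (alpha + 2 * xi - E) = Nr `^ alpha * Nr `^ xi ^+ 2 * Nr `^ (- E).
  by rewrite -powR_mulrn ?powR_ge0 // -powRrM -!powRD'; congr (_ `^ _); ring.
have -> : 4 * n%:R * n.+2%:R / (gamma / Nr `^ alpha) * enorm x ^+ 3 =
    4 * (Nr `^ alpha / gamma) * (n%:R * n.+2%:R * enorm x ^+ 3) by rewrite invf_div; ring.
have -> : 12 * L ^+ 2 / gamma * (Nr `^ alpha * Nr `^ xi ^+ 2 * Nr `^ (- E)) =
    4 * (Nr `^ alpha / gamma) * (3 * (L * Nr `^ xi) ^+ 2 * Nr `^ (- E)) by ring.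
apply: ler_wpM2l; first by rewrite mulr_ge0 ?divr_ge0 ?powR_ge0 ?ltW.
by apply: ler_pM; rewrite ?mulr_ge0 ?exprn_ge0 ?enorm_ge0.
Qed.

Theorem lemma9 (R : realType) (gamma alpha eps xi : R) (r : nat)
  (b : nat -> nat)
  (hgamma : 0 < gamma <= 1) (halpha : 0 < alpha < 1 / 4)
  (hr : (0 < r)%N) (heps : 0 < eps) (hxi : 0 < xi)
  (hb1 : forall N : nat, (1 <= b N)%N)
  (hblog : exists (K : R) (N1 : nat), forall N : nat, (N1 <= N)%N ->
             (b N)%:R <= K * ln (N%:R : R)) :
  exists (C : R) (N0 : nat), 0 < C /\
    forall N : nat, (1 <= N)%N -> (N0 <= N)%N ->
    let lam : R := 1 - gamma / (N%:R `^ alpha) in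
    forall sstar s : 'cV[R]_(b N),
      inS sstar -> fvec lam sstar = 0 ->
      inS s ->
      enorm (s - sstar) ^+ (2 * r) <= N%:R `^ (- eps) ->
      `| dotv (invmx ((Jac lam sstar)^T) *m (s - sstar))
              (hessq lam (s - sstar)) |
        <= C / (N%:R `^ (3 * eps / (2 * r%:R) - 2 * alpha - 3 * xi)).
Proof.
case: hblog => K [N1 hK]; have /andP[g0 _] := hgamma; case/andP: halpha => a0 _.
pose C0 := 12 * (`|K| / xi) ^+ 2 / gamma.
have C0_ge0 : 0 <= C0.
  by apply: divr_ge0; [apply: mulr_ge0; [exact: ler0n | exact: sqr_ge0] | exact: ltW].
exists (C0 + 1), N1; split=> [|N N_ge1 N_ge_N1 lam sstar s sstar_in sstar_eq _ close].
  lra.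
have Nr_ge1 : 1 <= N%:R :> R by rewrite ler1n.
have n_le := le_trans (hK N N_ge_N1) (mulr_ln_le_powR K Nr_ge1 hxi).
have x3 : enorm (s - sstar) ^+ 3 <= N%:R `^ (- (3 * eps / (2 * r%:R))).
  rewrite (_ : - _ = - eps * 3%:R / (2 * r)%:R); last by rewrite natrM; ring.
  by apply: expr_le_powR; rewrite ?ltr0n ?muln_gt0 ?andbT ?enorm_ge0.
apply: (le_trans (hessian_form_powR_bound hgamma (ltW a0) Nr_ge1 erefl (hb1 N)
  n_le x3 sstar_in sstar_eq)).
by rewrite -/C0 -powRN ler_pM ?powR_ge0 ?ler_powR //; lra.
Qed.
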